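(* Let $0<\lambda<\sqrt2$. Define coefficients $a_0=a_1=-\dfrac{1}{1-\lambda^2/2}$ and $a_{n+1}=\dfrac{n}{(n+1)(1+\lambda^2 n/2)}\,a_n$ for $n\ge1$, and set $$Y(x)=a_0\ln x+\sum_{n=1}^\infty a_nx^n,\qquad x>0$$ (the series converges for all $x$). Then $Y$ satisfies $\tfrac12\lambda^2x^2Y''+x(1-x)Y'=-1$ on $(0,\infty)$. For $0<\epsilon<1$ let $u(x;\epsilon)$ be the solution of $$\tfrac12\lambda^2x^2u''(x)+x(1-x)u'(x)=-1\ \ (\epsilon<x<1),\qquad u(\epsilon)=0,\ u(1)=0.$$ Then for every $x\in(0,1)$, $$\lim_{\epsilon\to0}u(x;\epsilon)=Y(x)-Y(1),$$ and $u(x):=Y(x)-Y(1)$ solves $\tfrac12\lambda^2x^2u''+x(1-x)u'=-1$ on $(0,1)$ with $u(1)=0$; moreover $u(x)\to\infty$ as $x\to0^+$.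
   Context: $u(x;\epsilon)$ is the mean exit time from $(\epsilon,1)$ of the solution of $dX=X(1-X)\,dt+\lambda X\,dB$ (Itô) started at $x$; the limit $u(x)$ is interpreted as the expected time to reach the (rescaled) carrying capacity $x=1$. *)

From Stdlib Require Import Reals Lra.
From Coquelicot Require Import Coquelicot.
Open Scope R_scope.

Fixpoint acoef (lam : R) (n : nat) : R :=
  match n with
  | O => - (1 / (1 - lam ^ 2 / 2))
  | S m =>
      match m with
      | O => - (1 / (1 - lam ^ 2 / 2))
      | S _ => INR m / (INR n * (1 + lam ^ 2 * INR m / 2)) * acoef lam m
      end
  end.

Definition Yfun (lam x : R) : R :=
  acoef lam 0 * ln x + Series (fun n => acoef lam (S n) * x ^ (S n)).

Definition Lop (lam : R) (f : R -> R) (x : R) : R :=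
  / 2 * lam ^ 2 * x ^ 2 * Derive (Derive f) x + x * (1 - x) * Derive f x.

Definition solves_at (lam : R) (f : R -> R) (x : R) : Prop :=
  ex_derive f x /\ ex_derive (Derive f) x /\ Lop lam f x = -1.

Definition bvp_solution (lam eps : R) (v : R -> R) : Prop :=
  (forall x, eps < x < 1 -> solves_at lam v x) /\
  filterlim v (at_right eps) (locally (v eps)) /\
  filterlim v (at_left 1) (locally (v 1)) /\
  v eps = 0 /\ v 1 = 0.

(* Write L f = (lam^2/2) x^2 f'' + x (1 - x) f', kappa = 2/lam^2 > 1,
   Y = a_0 ln + P with P(x) = sum_{n>=1} a_n x^n, and Z = Y - Y(1).

   1. The coefficients d_n = (n+1) a_{n+1} of P' satisfy d_0 = a_0 < 0 and
      (1 + lam^2 (n+1)/2) d_{n+1} = d_n.  By d'Alembert P is entire, and the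
      recursion is the coefficient form of (lam^2/2) x P'' + (1 - x) P' = a_0,
      which together with a_0 (1 - lam^2/2) = -1 gives L Y = -1 on (0, +oo).
   2. If v solves the problem on (eps, 1), then w = v - Z solves L w = 0, so
      w' = C e^{kappa t} t^{-kappa}.  From w(1-) = 0 we get |w(x)| <= |C| M,
      and since e^{kappa t} t^{-kappa} >= -(kappa - 1) ln t / t the function
      C w + C^2 (kappa - 1)/2 ln^2 is nondecreasing, which compares C w(x)
      with C w(eps) = -C Z(eps).  Eliminating C:
      |w(x)| (L(eps) - M) <= M |Z(eps)|, L(eps) = (kappa - 1)/2 (ln^2 eps - ln^2 x).
   3. Near 0, Z = a_0 ln + O(1): |Z(eps)| grows like |ln eps| and L(eps) like
      ln^2 eps, so w(x) -> 0 as eps -> 0+; also Z -> +oo at 0+. *)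

From Stdlib Require Import Reals Lra Lia FunctionalExtensionality.
From Coquelicot Require Import Coquelicot.
Open Scope R_scope.

Lemma Derive_sub_const (f : R -> R) (c : R) : Derive (fun y => f y - c) = Derive f.
Proof.
  apply functional_extensionality; intros x.
  unfold Derive; f_equal; apply Lim_ext; intros h; f_equal; ring.
Qed.

Lemma exp_monotone (a b : R) : a <= b -> exp a <= exp b.
Proof. intros [h | ->]; [left; now apply exp_increasing | right; reflexivity]. Qed.

Lemma mean_value (f df : R -> R) (a b : R) : a <= b ->
  (forall t, a <= t <= b -> is_derive f t (df t)) ->
  exists c, a <= c <= b /\ f b - f a = df c * (b - a).
Proof.
  intros hab hd.
  destruct (MVT_gen f a b df) as [c [hc1 hc2]].
  - intros t ht; rewrite Rmin_left, Rmax_right in ht by lra; apply hd; lra.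
  - intros t ht; rewrite Rmin_left, Rmax_right in ht by lra.
    assert (hdt : ex_derive f t) by (eexists; apply hd; lra).
    apply continuity_pt_filterlim; exact (ex_derive_continuous f t hdt).
  - rewrite Rmin_left, Rmax_right in hc1 by lra; eauto.
Qed.

Lemma increment_bound (f df : R -> R) (a b B : R) : a <= b ->
  (forall t, a <= t <= b -> is_derive f t (df t)) ->
  (forall t, a <= t <= b -> Rabs (df t) <= B) -> Rabs (f b - f a) <= B * (b - a).
Proof.
  intros hab hd hB; destruct (mean_value f df a b hab hd) as [c [hc ->]].
  rewrite Rabs_mult, (Rabs_pos_eq (b - a)) by lra.
  apply Rmult_le_compat_r; [lra | auto].
Qed.

Lemma derive_nonneg_monotone (f df : R -> R) (a b : R) : a <= b ->
  (forall t, a <= t <= b -> is_derive f t (df t)) ->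
  (forall t, a <= t <= b -> 0 <= df t) -> f a <= f b.
Proof.
  intros hab hd hpos; destruct (mean_value f df a b hab hd) as [c [hc he]].
  assert (0 <= df c * (b - a)) by (apply Rmult_le_pos; [apply hpos | lra]; auto).
  lra.
Qed.

Lemma derive_zero_constant (f : R -> R) (a b s t : R) :
  (forall y, a < y < b -> is_derive f y 0) -> a < s < b -> a < t < b -> f s = f t.
Proof.
  intros hd hs ht.
  assert (key : forall p q, a < p <= q -> q < b -> f p = f q).
  { intros p q hp hq.
    destruct (mean_value f (fun _ => 0) p q) as [c [_ hc]]; [lra | |].
    - intros y hy; apply hd; lra.
    - lra. }
  destruct (Rle_or_lt s t); [apply key | symmetry; apply key]; lra.
Qed.

Lemma lim_plus {F : (R -> Prop) -> Prop} {FF : Filter F} (f g : R -> R) (a b : R) :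
  filterlim f F (locally a) -> filterlim g F (locally b) ->
  filterlim (fun y => f y + g y) F (locally (a + b)).
Proof. intros hf hg; eapply filterlim_comp_2; eauto; apply (filterlim_plus a b). Qed.

Lemma lim_minus {F : (R -> Prop) -> Prop} {FF : Filter F} (f g : R -> R) (a b : R) :
  filterlim f F (locally a) -> filterlim g F (locally b) ->
  filterlim (fun y => f y - g y) F (locally (a - b)).
Proof.
  intros hf hg; apply lim_plus; auto.
  eapply filterlim_comp; eauto; apply (filterlim_opp b).
Qed.

Lemma lim_scal {F : (R -> Prop) -> Prop} {FF : Filter F} (f : R -> R) (c a : R) :
  filterlim f F (locally a) -> filterlim (fun y => c * f y) F (locally (c * a)).
Proof. intros hf; eapply filterlim_comp; eauto; apply (filterlim_scal_r c a). Qed.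

Lemma ex_derive_lim_within (f : R -> R) (x : R) (D : R -> Prop) :
  ex_derive f x -> filterlim f (within D (locally x)) (locally (f x)).
Proof.
  intros h; apply ex_derive_continuous in h.
  eapply filterlim_filter_le_1; [apply filter_le_within | exact h].
Qed.

Lemma limit_abs_bound {F : (R -> Prop) -> Prop} {FF : ProperFilter F}
  (f : R -> R) (l a B : R) :
  filterlim f F (locally l) -> F (fun y => Rabs (f y - a) <= B) -> Rabs (l - a) <= B.
Proof.
  intros hf hB.
  assert (hlo : Rbar_le (a - B) l).
  { refine (filterlim_le (fun _ => a - B) f (a - B) l _ (filterlim_const _) hf).
    generalize hB; apply filter_imp; intros y hy; apply Rabs_le_between' in hy; lra. }
  assert (hhi : Rbar_le l (a + B)).
  { refine (filterlim_le f (fun _ => a + B) l (a + B) _ hf (filterlim_const _)).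
    generalize hB; apply filter_imp; intros y hy; apply Rabs_le_between' in hy; lra. }
  simpl in hlo, hhi; apply Rabs_le; lra.
Qed.

Lemma inside_infinite_radius (a : nat -> R) (x : R) :
  CV_radius a = p_infty -> Rbar_lt (Rabs x) (CV_radius a).
Proof. intros ->; exact I. Qed.

Lemma lam2_bounds (lam : R) : 0 < lam < sqrt 2 -> 0 < lam ^ 2 < 2.
Proof.
  intros [h0 h2]; split; [apply pow_lt; lra |].
  rewrite <- (sqrt_sqrt 2) by lra; simpl; rewrite Rmult_1_r.
  apply Rmult_le_0_lt_compat; lra.
Qed.

Definition Pcoef (lam : R) : nat -> R := PS_incr_1 (fun n => acoef lam (S n)).
Definition Dcoef (lam : R) : nat -> R := PS_derive (Pcoef lam).

Lemma Yfun_decomp (lam x : R) : Yfun lam x = acoef lam 0 * ln x + PSeries (Pcoef lam) x.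
Proof.
  unfold Yfun, PSeries; f_equal.
  rewrite (Series_incr_1_aux (fun k => Pcoef lam k * x ^ k)); [reflexivity |].
  unfold Pcoef, PS_incr_1; simpl; unfold zero; simpl; ring.
Qed.

Definition Yder1 (lam y : R) : R := acoef lam 0 / y + PSeries (Dcoef lam) y.
Definition Yder2 (lam y : R) : R :=
  - acoef lam 0 / y ^ 2 + PSeries (PS_derive (Dcoef lam)) y.

Section SeriesSolution.

Variable lam : R.
Hypothesis hlam : 0 < lam ^ 2 < 2.

Lemma acoef0_eq : acoef lam 0 * (1 - lam ^ 2 / 2) = -1.
Proof. change (acoef lam 0) with (- (1 / (1 - lam ^ 2 / 2))); field; lra. Qed.

Lemma acoef0_neg : acoef lam 0 < 0.
Proof. pose proof acoef0_eq; nra. Qed.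

Lemma Dcoef_0 : Dcoef lam 0 = acoef lam 0.
Proof. unfold Dcoef, PS_derive; simpl; ring. Qed.

Lemma Dcoef_rec (n : nat) : (1 + lam ^ 2 / 2 * INR (S n)) * Dcoef lam (S n) = Dcoef lam n.
Proof.
  unfold Dcoef, PS_derive, Pcoef, PS_incr_1.
  change (acoef lam (S (S n))) with
    (INR (S n) / (INR (S (S n)) * (1 + lam ^ 2 * INR (S n) / 2)) * acoef lam (S n)).
  assert (0 < INR (S n)) by (apply lt_0_INR; lia).
  assert (0 < INR (S (S n))) by (apply lt_0_INR; lia).
  assert (0 < lam ^ 2 * INR (S n)) by (apply Rmult_lt_0_compat; lra).
  field; lra.
Qed.

Lemma Dcoef_neg (n : nat) : Dcoef lam n < 0.
Proof.
  induction n as [| n IH].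
  - rewrite Dcoef_0; exact acoef0_neg.
  - pose proof (Dcoef_rec n); pose proof (pos_INR (S n)).
    assert (0 <= lam ^ 2 / 2 * INR (S n)) by (apply Rmult_le_pos; lra).
    nra.
Qed.

(* d'Alembert: |d_{n+1} / d_n| = 1 / (1 + lam^2 (n+1)/2) -> 0. *)
Lemma Dcoef_radius : CV_radius (Dcoef lam) = p_infty.
Proof.
  apply CV_radius_infinite_DAlembert.
  - intros n; pose proof (Dcoef_neg n); lra.
  - apply is_lim_seq_le_le with (u := fun _ => 0)
      (w := fun n => 2 / lam ^ 2 * / INR (S n)).
    + intros n.
      pose proof (Dcoef_neg (S n)).
      assert (hs : 0 < INR (S n)) by (apply lt_0_INR; lia).
      assert (hq : 0 < lam ^ 2 / 2 * INR (S n)) by (apply Rmult_lt_0_compat; lra).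
      replace (Dcoef lam (S n) / Dcoef lam n) with (/ (1 + lam ^ 2 / 2 * INR (S n)))
        by (rewrite <- (Dcoef_rec n); field; lra).
      rewrite Rabs_pos_eq by (left; apply Rinv_0_lt_compat; lra).
      split; [left; apply Rinv_0_lt_compat; lra |].
      replace (2 / lam ^ 2 * / INR (S n)) with (/ (lam ^ 2 / 2 * INR (S n)))
        by (field; split; [lra | intros ->; simpl in hlam; lra]).
      apply Rinv_le_contravar; lra.
    + apply is_lim_seq_const.
    + replace (Finite 0) with (Rbar_mult (2 / lam ^ 2) 0) by (simpl; f_equal; ring).
      apply is_lim_seq_scal_l.
      replace (Finite 0) with (Rbar_inv p_infty) by reflexivity.
      apply is_lim_seq_inv; [| discriminate].
      apply -> (is_lim_seq_incr_1 INR); apply is_lim_seq_INR.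
Qed.

Lemma Pcoef_radius : CV_radius (Pcoef lam) = p_infty.
Proof. rewrite <- CV_radius_derive; exact Dcoef_radius. Qed.

Lemma acoef_series_converges (x : R) : ex_series (fun n => acoef lam (S n) * x ^ (S n)).
Proof.
  assert (h : ex_series (fun k => Pcoef lam k * x ^ k)).
  { apply (ex_series_ext (fun k => scal (pow_n x k) (Pcoef lam k))).
    - intros n; rewrite pow_n_pow; unfold scal; simpl; unfold mult; simpl; ring.
    - apply CV_radius_inside, inside_infinite_radius, Pcoef_radius. }
  apply ex_series_incr_1 in h; exact h.
Qed.

(* The coefficient recursion is the power-series form of
   (lam^2/2) x P'' + (1 - x) P' = a_0: both sides of
   (lam^2/2) x P'' + P' = a_0 + x P' have coefficients (1 + lam^2 n/2) d_n. *)
Lemma Dcoef_series_identity (x : R) :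
  lam ^ 2 / 2 * x * PSeries (PS_derive (Dcoef lam)) x + (1 - x) * PSeries (Dcoef lam) x
  = acoef lam 0.
Proof.
  set (d := Dcoef lam).
  set (b := PS_plus d (PS_scal (lam ^ 2 / 2) (PS_incr_1 (PS_derive d)))).
  assert (hd : ex_pseries d x)
    by (apply CV_radius_inside, inside_infinite_radius, Dcoef_radius).
  assert (hdd : ex_pseries (PS_incr_1 (PS_derive d)) x).
  { apply ex_pseries_incr_1, CV_radius_inside, inside_infinite_radius.
    rewrite CV_radius_derive; exact Dcoef_radius. }
  assert (hb : ex_pseries b x).
  { apply ex_pseries_plus; [exact hd |].
    apply ex_pseries_scal; [apply Rmult_comm | exact hdd]. }
  assert (b_split : PSeries b x = PSeries d x + lam ^ 2 / 2 * (x * PSeries (PS_derive d) x)).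
  { unfold b; rewrite PSeries_plus, PSeries_scal, PSeries_incr_1; auto.
    apply ex_pseries_scal; [apply Rmult_comm | exact hdd]. }
  assert (b_shift : PSeries b x = acoef lam 0 + x * PSeries d x).
  { rewrite PSeries_decr_1 by exact hb; f_equal.
    - change (@eq R (d 0%nat + lam ^ 2 / 2 * 0) (acoef lam 0)).
      unfold d; rewrite Dcoef_0; ring.
    - f_equal; apply PSeries_ext; intros n.
      change (PS_decr_1 b n) with (d (S n) + lam ^ 2 / 2 * (INR (S n) * d (S n))).
      unfold d; rewrite <- (Dcoef_rec n); ring. }
  lra.
Qed.

Lemma Yfun_derive (y : R) : 0 < y -> is_derive (Yfun lam) y (Yder1 lam y).
Proof.
  intros hy.
  apply is_derive_ext with (f := fun t => acoef lam 0 * ln t + PSeries (Pcoef lam) t).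
  { intros t; now rewrite Yfun_decomp. }
  apply (is_derive_plus (fun t => acoef lam 0 * ln t) (PSeries (Pcoef lam))).
  - apply is_derive_scal, is_derive_ln; exact hy.
  - apply is_derive_PSeries, inside_infinite_radius, Pcoef_radius.
Qed.

Lemma Yder1_derive (y : R) : 0 < y -> is_derive (Yder1 lam) y (Yder2 lam y).
Proof.
  intros hy; unfold Yder1, Yder2.
  apply (is_derive_plus (fun t => acoef lam 0 / t) (PSeries (Dcoef lam))).
  - generalize (acoef lam 0); intros a0; auto_derive; [lra | field; lra].
  - apply is_derive_PSeries, inside_infinite_radius, Dcoef_radius.
Qed.

Lemma Yder_ode (y : R) : 0 < y ->
  / 2 * lam ^ 2 * y ^ 2 * Yder2 lam y + y * (1 - y) * Yder1 lam y = -1.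
Proof.
  intros hy; unfold Yder1, Yder2.
  transitivity (acoef lam 0 * (1 - lam ^ 2 / 2)
    + y * (lam ^ 2 / 2 * y * PSeries (PS_derive (Dcoef lam)) y
           + (1 - y) * PSeries (Dcoef lam) y - acoef lam 0)); [field; lra |].
  rewrite Dcoef_series_identity, acoef0_eq; ring.
Qed.

Lemma Yfun_solves (x : R) : 0 < x -> solves_at lam (Yfun lam) x.
Proof.
  intros hx.
  assert (hD : locally x (fun t => Yder1 lam t = Derive (Yfun lam) t)).
  { generalize (open_gt 0 x hx); apply filter_imp; intros t ht.
    symmetry; apply is_derive_unique, Yfun_derive; exact ht. }
  assert (hDD : is_derive (Derive (Yfun lam)) x (Yder2 lam x))
    by (eapply is_derive_ext_loc; [exact hD | apply Yder1_derive; exact hx]).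
  split; [| split].
  - eexists; apply Yfun_derive; exact hx.
  - eexists; exact hDD.
  - unfold Lop; rewrite (is_derive_unique _ _ _ hDD).
    rewrite (is_derive_unique _ _ _ (Yfun_derive x hx)); apply Yder_ode; exact hx.
Qed.

End SeriesSolution.

Definition Zfun (lam y : R) : R := Yfun lam y - Yfun lam 1.

Lemma solves_sub_const (lam c x : R) (f : R -> R) :
  solves_at lam f x -> solves_at lam (fun y => f y - c) x.
Proof.
  intros [[l hl] [h2 h3]]; unfold solves_at, Lop in *; rewrite Derive_sub_const.
  split; [| split; auto].
  exists (l - 0); apply (is_derive_minus f (fun _ => c)); [exact hl | auto_derive; auto].
Qed.

Lemma Zfun_derive (lam y : R) : 0 < lam ^ 2 < 2 -> 0 < y -> is_derive (Zfun lam) y (Yder1 lam y).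
Proof.
  intros hl hy; replace (Yder1 lam y) with (Yder1 lam y - 0) by ring.
  apply (is_derive_minus (Yfun lam) (fun _ => Yfun lam 1));
    [apply Yfun_derive; auto | auto_derive; auto].
Qed.

(* The exponent kappa = 2 / lam^2 > 1 and the reciprocal integrating factor
   weight k t = e^{k t} t^{-k} of the homogeneous equation. *)
Definition kappa (lam : R) : R := 2 / lam ^ 2.
Definition weight (k t : R) : R := exp (k * t - k * ln t).

Lemma kappa_gt_1 (lam : R) : 0 < lam ^ 2 < 2 -> 1 < kappa lam.
Proof.
  intros hl; unfold kappa; apply (Rmult_lt_reg_r (lam ^ 2)); [lra |].
  unfold Rdiv; rewrite Rmult_assoc, Rinv_l by lra; lra.
Qed.

Lemma homogeneous_solution (lam a b : R) (g dg : R -> R) : lam <> 0 -> 0 <= a < b ->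
  (forall t, a < t < b -> is_derive g t (dg t)) ->
  (forall t, a < t < b -> / 2 * lam ^ 2 * t ^ 2 * dg t + t * (1 - t) * g t = 0) ->
  exists C, forall t, a < t < b -> g t = C * weight (kappa lam) t.
Proof.
  intros hl hab hg hode.
  set (k := kappa lam); set (rho := fun t => exp (k * ln t - k * t)).
  assert (hrho : forall t, 0 < t -> is_derive rho t (rho t * (k * / t - k))).
  { intros t ht; unfold rho; auto_derive; [lra | unfold Rminus; ring]. }
  assert (hconst : forall t, a < t < b -> is_derive (fun t => g t * rho t) t 0).
  { intros t ht.
    replace 0 with (dg t * rho t + g t * (rho t * (k * / t - k))).
    { apply Derive.is_derive_mult; [apply hg | apply hrho]; lra. }
    transitivity (rho t * (2 / (lam ^ 2 * t ^ 2))
      * (/ 2 * lam ^ 2 * t ^ 2 * dg t + t * (1 - t) * g t)).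
    - unfold k, kappa; field; repeat split; (exact hl || lra).
    - rewrite hode by exact ht; ring. }
  set (m := (a + b) / 2).
  exists (g m * rho m); intros t ht.
  rewrite <- (derive_zero_constant _ a b t m hconst ht) by (unfold m; lra).
  unfold weight, rho; rewrite Rmult_assoc, <- exp_plus.
  replace (k * ln t - k * t + (k * t - k * ln t)) with 0 by ring.
  rewrite exp_0; ring.
Qed.

Lemma bvp_difference_derivative (lam e : R) (v : R -> R) :
  0 < lam ^ 2 < 2 -> 0 < e < 1 -> bvp_solution lam e v ->
  exists C, forall t, e < t < 1 ->
    is_derive (fun y => v y - Zfun lam y) t (C * weight (kappa lam) t).
Proof.
  intros hl he [hs _].
  destruct (homogeneous_solution lam e 1 (fun t => Derive v t - Yder1 lam t)
              (fun t => Derive (Derive v) t - Yder2 lam t)) as [C hC];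
    [intros ->; simpl in hl; lra | lra | | |].
  - intros t ht; destruct (hs t ht) as [_ [h2 _]].
    apply (is_derive_minus (Derive v) (Yder1 lam));
      [now apply Derive_correct | apply Yder1_derive; lra].
  - intros t ht; destruct (hs t ht) as [_ [_ h3]]; unfold Lop in h3.
    pose proof (Yder_ode lam hl t ltac:(lra)); lra.
  - exists C; intros t ht; rewrite <- hC by exact ht.
    destruct (hs t ht) as [h1 _].
    apply (is_derive_minus v (Zfun lam));
      [now apply Derive_correct | apply Zfun_derive; lra].
Qed.

(* weight k t >= -(k - 1) ln t / t, a lower bound with explicit primitive
   -(k - 1) ln^2 t / 2; it comes from e^{kt} >= 1 and e^s >= s. *)
Lemma weight_lower_bound (k t : R) : 0 <= k -> 0 < t ->
  - ((k - 1) * ln t) / t <= weight k t.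
Proof.
  intros hk ht; unfold weight.
  assert (hexp : exp (- k * ln t) <= exp (k * t - k * ln t)).
  { apply exp_monotone; assert (0 <= k * t) by (apply Rmult_le_pos; lra); lra. }
  replace (- k * ln t) with (- ln t + - ((k - 1) * ln t)) in hexp by ring.
  rewrite exp_plus, exp_Ropp, exp_ln in hexp by exact ht.
  pose proof (exp_ineq1_le (- ((k - 1) * ln t))).
  assert (0 < / t) by (apply Rinv_0_lt_compat; exact ht).
  unfold Rdiv; nra.
Qed.

Section DifferenceEstimates.

Variables (k e C we : R) (w : R -> R).
Hypothesis hk : 1 < k.
Hypothesis he : 0 < e < 1.
Hypothesis hw' : forall t, e < t < 1 -> is_derive w t (C * weight k t).
Hypothesis hw1 : filterlim w (at_left 1) (locally 0).
Hypothesis hwe : filterlim w (at_right e) (locally we).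

(* On [x, 1) the weight is at most e^{k - k ln x}; integrate up to 1. *)
Lemma difference_upper_bound (x : R) : e < x < 1 ->
  Rabs (w x) <= Rabs C * exp (k - k * ln x).
Proof.
  intros hx.
  assert (hinc : at_left 1 (fun y => Rabs (w y - w x) <= Rabs C * exp (k - k * ln x))).
  { exists (mkposreal (1 - x) ltac:(lra)); intros y hy hy1.
    apply Rabs_lt_between' in hy; simpl in hy.
    eapply Rle_trans; [apply (increment_bound w (fun t => C * weight k t) x y
                              (Rabs C * exp (k - k * ln x))); [lra | |] |].
    - intros t ht; apply hw'; lra.
    - intros t ht; rewrite Rabs_mult, (Rabs_pos_eq (weight k t)) by (left; apply exp_pos).
      apply Rmult_le_compat_l; [apply Rabs_pos |].
      unfold weight; apply exp_monotone.
      assert (k * ln x <= k * ln t) by (apply Rmult_le_compat_l; [lra | apply ln_le; lra]).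
      assert (k * t <= k * 1) by (apply Rmult_le_compat_l; lra).
      lra.
    - assert (0 <= Rabs C * exp (k - k * ln x))
        by (apply Rmult_le_pos; [apply Rabs_pos | left; apply exp_pos]).
      rewrite <- (Rmult_1_r (Rabs C * exp (k - k * ln x))) at 2.
      apply Rmult_le_compat_l; lra. }
  pose proof (limit_abs_bound w 0 (w x) _ hw1 hinc) as h.
  rewrite Rabs_minus_sym, Rminus_0_r in h; exact h.
Qed.

(* C w + C^2 (k - 1)/2 ln^2 is nondecreasing on (e, 1) by the lower bound
   on the weight; compare its values at e+ and at x. *)
Lemma difference_lower_bound (x : R) : e < x < 1 ->
  C ^ 2 * (k - 1) / 2 * (ln e ^ 2 - ln x ^ 2) <= C * (w x - we).
Proof.
  intros hx.
  set (K := C ^ 2 * (k - 1) / 2).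
  set (H := fun t => C * w t + K * ln t ^ 2).
  set (dH := fun t => C * (C * weight k t) + K * (2 * ln t * / t)).
  assert (hmono : at_right e (fun y => H y <= H x)).
  { exists (mkposreal (x - e) ltac:(lra)); intros y hy hey.
    apply Rabs_lt_between' in hy; simpl in hy.
    apply (derive_nonneg_monotone H dH); [lra | |].
    - intros t ht; unfold H, dH.
      apply (is_derive_plus (fun t => C * w t) (fun t => K * ln t ^ 2));
        apply is_derive_scal; [apply hw'; lra | auto_derive; [lra | ring]].
    - intros t ht; unfold dH, K.
      pose proof (weight_lower_bound k t ltac:(lra) ltac:(lra)).
      replace (C * (C * weight k t) + C ^ 2 * (k - 1) / 2 * (2 * ln t * / t))
        with (C ^ 2 * (weight k t - - ((k - 1) * ln t) / t)) by (field; lra).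
      apply Rmult_le_pos; [apply pow2_ge_0 | lra]. }
  assert (hlim : filterlim H (at_right e) (locally (C * we + K * ln e ^ 2))).
  { apply lim_plus; [now apply lim_scal |].
    apply (ex_derive_lim_within (fun t => K * ln t ^ 2)); auto_derive; lra. }
  pose proof (filterlim_le H (fun _ => H x) (C * we + K * ln e ^ 2) (H x)
                hmono hlim (filterlim_const _)) as h.
  simpl in h; unfold H in h.
  assert (C * (w x - we) - K * (ln e ^ 2 - ln x ^ 2)
          = (C * w x + K * ln x ^ 2) - (C * we + K * ln e ^ 2)) by ring.
  unfold K in *; lra.
Qed.

(* Eliminating C between the two bounds. *)
Lemma difference_bound (x : R) : e < x < 1 ->
  0 <= (k - 1) / 2 * (ln e ^ 2 - ln x ^ 2) - exp (k - k * ln x) ->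
  Rabs (w x) * ((k - 1) / 2 * (ln e ^ 2 - ln x ^ 2) - exp (k - k * ln x))
  <= exp (k - k * ln x) * Rabs we.
Proof.
  intros hx hLM.
  set (M := exp (k - k * ln x)) in *; set (L := (k - 1) / 2 * (ln e ^ 2 - ln x ^ 2)) in *.
  pose proof (difference_upper_bound x hx) as hup; fold M in hup.
  pose proof (difference_lower_bound x hx) as hlow.
  assert (hM : 0 < M) by apply exp_pos.
  set (c := Rabs C) in *.
  assert (hc0 : 0 <= c) by apply Rabs_pos.
  assert (hcoef : c * (c * (L - M)) <= c * Rabs we).
  { assert (C * (w x - we) <= c * (Rabs (w x) + Rabs we)).
    { eapply Rle_trans; [apply Rle_abs |].
      rewrite Rabs_mult; apply Rmult_le_compat_l; [apply Rabs_pos |].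
      unfold Rminus; rewrite <- (Rabs_Ropp we); apply Rabs_triang. }
    assert (c * Rabs (w x) <= c * (c * M)) by (apply Rmult_le_compat_l; lra).
    assert (C ^ 2 * (k - 1) / 2 * (ln e ^ 2 - ln x ^ 2) = c * (c * L))
      by (unfold c, L; rewrite <- pow2_abs; field).
    lra. }
  destruct hc0 as [hc | hc].
  - assert (c * (L - M) <= Rabs we) by (apply (Rmult_le_reg_l c); lra).
    eapply Rle_trans; [apply Rmult_le_compat_r; [exact hLM | exact hup] |].
    replace (c * M * (L - M)) with (M * (c * (L - M))) by ring.
    apply Rmult_le_compat_l; lra.
  - rewrite <- hc, Rmult_0_l in hup.
    replace (Rabs (w x)) with 0 by (pose proof (Rabs_pos (w x)); lra).
    rewrite Rmult_0_l; apply Rmult_le_pos; [lra | apply Rabs_pos].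
Qed.

End DifferenceEstimates.

Lemma bvp_solution_estimate (lam e x : R) (v : R -> R) :
  0 < lam ^ 2 < 2 -> 0 < e < x -> x < 1 -> bvp_solution lam e v ->
  0 <= (kappa lam - 1) / 2 * (ln e ^ 2 - ln x ^ 2) - exp (kappa lam - kappa lam * ln x) ->
  Rabs (v x - Zfun lam x) *
    ((kappa lam - 1) / 2 * (ln e ^ 2 - ln x ^ 2) - exp (kappa lam - kappa lam * ln x))
  <= exp (kappa lam - kappa lam * ln x) * Rabs (Zfun lam e).
Proof.
  intros hl hex hx1 hv hLM.
  destruct (bvp_difference_derivative lam e v hl ltac:(lra) hv) as [C hC].
  destruct hv as [_ [hright [hleft [hve hv1]]]].
  assert (hZ : forall y, 0 < y -> ex_derive (Zfun lam) y)
    by (intros y hy; eexists; apply Zfun_derive; auto).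
  replace (Rabs (Zfun lam e)) with (Rabs (v e - Zfun lam e))
    by (rewrite hve, Rminus_0_l, Rabs_Ropp; reflexivity).
  apply (difference_bound (kappa lam) e C _ (fun y => v y - Zfun lam y));
    [apply kappa_gt_1; exact hl | lra | exact hC | | | lra | exact hLM].
  - replace 0 with (v 1 - Zfun lam 1) by (unfold Zfun; rewrite hv1; ring).
    apply lim_minus; [exact hleft | apply ex_derive_lim_within, hZ; lra].
  - apply lim_minus; [exact hright | apply ex_derive_lim_within, hZ; lra].
Qed.

Lemma at_right_0_interval (d : R) : 0 < d -> at_right 0 (fun e => 0 < e < d).
Proof.
  intros hd; exists (mkposreal d hd); intros e he he0.
  apply Rabs_lt_between' in he; simpl in he; lra.
Qed.

Lemma at_right_0_log_large (T : R) : at_right 0 (fun e => T < - ln e).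
Proof.
  assert (h : at_right 0 (fun e => ln e < - T))
    by exact (is_lim_ln_0 (fun y => y < - T) (ex_intro _ (- T) (fun y hy => hy))).
  generalize h; apply filter_imp; intros e he; lra.
Qed.

(* Near 0, Z(y) = a_0 ln y + O(1), because P is continuous with P(0) = 0. *)
Lemma Zfun_log_expansion (lam : R) : 0 < lam ^ 2 < 2 ->
  exists B, at_right 0 (fun y => Rabs (Zfun lam y - acoef lam 0 * ln y) <= B).
Proof.
  intros hl; exists (1 + Rabs (Yfun lam 1)).
  assert (hcont := ex_derive_continuous _ _
    (ex_derive_PSeries (Pcoef lam) 0 (inside_infinite_radius _ 0 (Pcoef_radius lam hl)))).
  apply filter_le_within.
  generalize (proj1 (filterlim_locally _ _) hcont (mkposreal 1 Rlt_0_1)).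
  apply filter_imp; intros y hy.
  assert (hP : Rabs (PSeries (Pcoef lam) y) < 1).
  { assert (h : Rabs (PSeries (Pcoef lam) y - PSeries (Pcoef lam) 0) < 1) by exact hy.
    rewrite PSeries_0 in h; unfold Pcoef, PS_incr_1 in h; rewrite Rminus_0_r in h.
    exact h. }
  unfold Zfun; rewrite Yfun_decomp.
  replace (acoef lam 0 * ln y + PSeries (Pcoef lam) y - Yfun lam 1 - acoef lam 0 * ln y)
    with (PSeries (Pcoef lam) y - Yfun lam 1) by ring.
  pose proof (Rabs_triang (PSeries (Pcoef lam) y) (- Yfun lam 1)).
  rewrite Rabs_Ropp in H; unfold Rminus; lra.
Qed.

Lemma quadratic_dominates (a b c : R) : 0 < a ->
  exists T, 0 <= T /\ forall z, T < z -> b * z + c < a * z ^ 2.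
Proof.
  intros ha; exists ((Rabs b + Rabs c) / a + 1); split.
  - assert (0 <= (Rabs b + Rabs c) / a)
      by (apply Rdiv_le_0_compat; [pose proof (Rabs_pos b); pose proof (Rabs_pos c); lra | lra]).
    lra.
  - intros z hz.
    assert (haz : Rabs b + Rabs c + a < a * z).
    { apply (Rmult_lt_compat_l a) in hz; [| lra].
      replace (a * ((Rabs b + Rabs c) / a + 1)) with (Rabs b + Rabs c + a) in hz
        by (field; lra).
      exact hz. }
    assert (1 < z).
    { assert (0 <= (Rabs b + Rabs c) / a)
        by (apply Rdiv_le_0_compat; [pose proof (Rabs_pos b); pose proof (Rabs_pos c); lra | lra]).
      lra. }
    pose proof (Rle_abs b); pose proof (Rle_abs c); pose proof (Rabs_pos c).
    nra.
Qed.

(* For fixed x in (0, 1), u(x; eps) -> Z(x) as eps -> 0+: in the estimate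
   above |Z(eps)| grows like |ln eps| while L(eps) grows like ln^2 eps. *)
Lemma bvp_limit (lam x : R) (u : R -> R -> R) : 0 < lam ^ 2 < 2 ->
  (forall eps, 0 < eps < 1 -> bvp_solution lam eps (u eps)) -> 0 < x < 1 ->
  filterlim (fun eps => u eps x) (at_right 0) (locally (Zfun lam x)).
Proof.
  intros hl hu hx; apply filterlim_locally; intros eta.
  pose proof (cond_pos eta) as heta.
  set (k := kappa lam); set (M := exp (k - k * ln x)); set (a0 := acoef lam 0).
  assert (hk : 1 < k) by exact (kappa_gt_1 lam hl).
  assert (hM : 0 < M) by apply exp_pos.
  assert (ha0 : a0 < 0) by exact (acoef0_neg lam hl).
  destruct (Zfun_log_expansion lam hl) as [B hB].
  destruct (quadratic_dominates (eta * (k - 1) / 2) (M * - a0)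
              (M * B + eta * ((k - 1) / 2 * ln x ^ 2 + M))) as [T [hT0 hT]].
  { unfold Rdiv; apply Rmult_lt_0_compat; [apply Rmult_lt_0_compat |]; lra. }
  generalize (filter_and _ _ (at_right_0_interval x (proj1 hx))
               (filter_and _ _ hB (at_right_0_log_large T))).
  apply filter_imp; intros e [he [hZe hz]].
  set (z := - ln e) in hz.
  set (L := (k - 1) / 2 * (ln e ^ 2 - ln x ^ 2)).
  assert (hZ : Rabs (Zfun lam e) <= - a0 * z + B).
  { replace (Zfun lam e) with ((Zfun lam e - a0 * ln e) + a0 * ln e) by ring.
    eapply Rle_trans; [apply Rabs_triang |].
    assert (hlne : ln e < 0) by (rewrite <- ln_1; apply ln_increasing; lra).
    rewrite Rabs_mult, (Rabs_left a0), (Rabs_left (ln e)) by assumption.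
    fold a0 in hZe; unfold z; lra. }
  assert (hdom : M * Rabs (Zfun lam e) < eta * (L - M)).
  { specialize (hT z hz).
    assert (M * Rabs (Zfun lam e) <= M * (- a0 * z + B))
      by (apply Rmult_le_compat_l; lra).
    assert (hsq : ln e ^ 2 = z ^ 2) by (unfold z; ring).
    unfold L; rewrite hsq; lra. }
  assert (hLM : 0 < L - M).
  { apply (Rmult_lt_reg_l eta); [exact heta |].
    pose proof (Rabs_pos (Zfun lam e)).
    assert (0 <= M * Rabs (Zfun lam e)) by (apply Rmult_le_pos; lra).
    lra. }
  pose proof (bvp_solution_estimate lam e x (u e) hl he (proj2 hx) (hu e ltac:(lra)))
    as hest.
  fold k M L in hest.
  change (Rabs (u e x - Zfun lam x) < eta).
  apply (Rmult_lt_reg_r (L - M)); [exact hLM |].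
  specialize (hest ltac:(lra)); lra.
Qed.

(* Z(y) = a_0 ln y + O(1) -> +oo as y -> 0+, since a_0 < 0. *)
Lemma Zfun_to_infinity (lam : R) : 0 < lam ^ 2 < 2 ->
  filterlim (Zfun lam) (at_right 0) (Rbar_locally p_infty).
Proof.
  intros hl P [N hP]; unfold filtermap.
  pose proof (acoef0_neg lam hl) as ha0.
  destruct (Zfun_log_expansion lam hl) as [B hB].
  generalize (filter_and _ _ hB (at_right_0_log_large ((N + B) / - acoef lam 0))).
  apply filter_imp; intros y [hy hz]; apply hP.
  apply Rabs_le_between' in hy.
  apply (Rmult_lt_compat_l (- acoef lam 0)) in hz; [| lra].
  replace (- acoef lam 0 * ((N + B) / - acoef lam 0)) with (N + B) in hz by (field; lra).
  lra.
Qed.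

Theorem mainTheorem6 (lam : R) (hlam : 0 < lam < sqrt 2)
  (u : R -> R -> R)
  (hu : forall eps, 0 < eps < 1 -> bvp_solution lam eps (u eps)) :
  (forall x, ex_series (fun n => acoef lam (S n) * x ^ (S n))) /\
  (forall x, 0 < x -> solves_at lam (Yfun lam) x) /\
  (forall x, 0 < x < 1 ->
     filterlim (fun eps => u eps x) (at_right 0)
               (locally (Yfun lam x - Yfun lam 1))) /\
  (forall x, 0 < x < 1 -> solves_at lam (fun y => Yfun lam y - Yfun lam 1) x) /\
  (Yfun lam 1 - Yfun lam 1 = 0) /\
  filterlim (fun x => Yfun lam x - Yfun lam 1) (at_right 0) (Rbar_locally p_infty).
Proof.
  pose proof (lam2_bounds lam hlam) as hl.
  split; [| split; [| split; [| split; [| split]]]].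
  - exact (acoef_series_converges lam hl).
  - exact (Yfun_solves lam hl).
  - intros x hx; exact (bvp_limit lam x u hl hu hx).
  - intros x hx; apply solves_sub_const, Yfun_solves; [exact hl | lra].
  - ring.
  - exact (Zfun_to_infinity lam hl).
Qed.
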